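(* Consider the discrete-time LPV system $x_{k+1}=A(p_k)x_k+B(p_k)u_k$ with affine $A(p)=A_0+\sum_{i=1}^{n_p}p_iA_i$, $B(p)=B_0+\sum_{i=1}^{n_p}p_iB_i$, and a data set $\mathcal{D}$ from it such that $\mathcal{D}_p$ has full row rank $(1+n_p)(n_x+n_u)$. Let $K(p)=K_0+\sum_i p_iK_i$ be a given LPV state-feedback controller, $\bar K=[K_1\ \cdots\ K_{n_p}]$, and $$\mathcal{M}_{CL}=\begin{bmatrix} I_{n_x}&0&0\\ 0& I_{n_p}\otimes I_{n_x}&0\\ K_0&\bar K&0\\ 0& I_{n_p}\otimes K_0& I_{n_p}\otimes \bar K\end{bmatrix}.$$ Suppose there exist $P\in\mathbb{S}^{n_x}$ with $P\succ0$, matrices $\mathcal{F}\in\mathbb{R}^{(N_d-1)\times n_x(1+n_p+n_p^2)}$ and $F_Q\in\mathbb{R}^{(N_d-1)(1+n_p)\times n_x(1+n_p)}$ related by $$\mathcal{F}\begin{bmatrix}I_{n_x}\\ p\otimes I_{n_x}\\ p\otimes p\otimes I_{n_x}\end{bmatrix}=\begin{bmatrix}I_{N_d-1}\\ p\otimes I_{N_d-1}\end{bmatrix}^\top F_Q\begin{bmatrix}I_{n_x}\\ p\otimes I_{n_x}\end{bmatrix}\quad\forall p\in\mathbb{P},$$ and a multiplier $\Xi\in\mathbb{S}^{4n_pn_x}$ such that $$\mathcal{M}_{CL}\,\mathrm{blkdiag}(P,\ I_{n_p}\otimes P,\ I_{n_p}\otimes I_{n_p}\otimes P)=\mathcal{D}_p\mathcal{F},$$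 and the full-block LMI conditions (defined in the context) hold with $\Delta(p)=\mathrm{diag}(p)\otimes I_{2n_x}$, $W=\begin{bmatrix}P_0&\mathcal{X}_+F_Q\\ (\mathcal{X}_+F_Q)^\top & P_0\end{bmatrix}$, $P_0=\mathrm{blkdiag}(P,0_{n_xn_p})$, $\mathcal{X}_+=\mathrm{blkdiag}(X_+,I_{n_p}\otimes X_+)$, and $L_{11}=0_{2n_xn_p}$, $L_{12}=1_{n_p}\otimes I_{2n_x}$, $L_{21}=\begin{bmatrix}0_{n_x\times 2n_xn_p}\\ I_{n_p}\otimes[I_{n_x}\ 0]\\ 0_{n_x\times 2n_xn_p}\\ I_{n_p}\otimes[0\ I_{n_x}]\end{bmatrix}$, $L_{22}=\begin{bmatrix}[I_{n_x}\ 0]\\ 1_{n_p}\otimes 0_{n_x\times 2n_x}\\ [0\ I_{n_x}]\\ 1_{n_p}\otimes 0_{n_x\times 2n_x}\end{bmatrix}$. Then $K(p)$ stabilizes the system under the feedback law $u_k=K(p_k)x_k$.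
   Context: Notation: $\otimes$ Kronecker product; $I_n$ identity; $0_{n\times m}$, $0_n$ zero matrices; $1_n\in\mathbb{R}^n$ the all-ones vector; $\mathbb{S}^n$ real symmetric $n\times n$ matrices; $\mathrm{blkdiag}$ block-diagonal concatenation; $\mathrm{diag}(p)$ diagonal matrix with the entries of $p$. The system has fully measured state $x_k\in\mathbb{R}^{n_x}$, input $u_k\in\mathbb{R}^{n_u}$, scheduling $p_k\in\mathbb{P}\subset\mathbb{R}^{n_p}$ with $\mathbb{P}$ compact and convex; $A_i,B_i$ unknown real matrices. $\mathcal{D}=\{u^d_k,p^d_k,x^d_k\}_{k=1}^{N_d}$ is a trajectory of the system; $U=[u^d_1\cdots u^d_{N_d-1}]$, $U^p=[p^d_1\otimes u^d_1\cdots p^d_{N_d-1}\otimes u^d_{N_d-1}]$, $X=[x^d_1\cdots x^d_{N_d-1}]$, $X^p=[p^d_1\otimes x^d_1\cdots p^d_{N_d-1}\otimes x^d_{N_d-1}]$, $X_+=[x^d_2\cdots x^d_{N_d}]$, $\mathcal{D}_p=[X^\top\ (X^p)^\top\ U^\top\ (U^p)^\top]^\top$. ''Stabilizes'' means the closed loop $x_{k+1}=(A(p_k)+B(p_k)K(p_k))x_k$ is asymptotically stable for all scheduling trajectories with values in $\mathbb{P}$. Full-block LMI conditions for given $(\Delta(p),W,L_{11},L_{12},L_{21},L_{22})$ and symmetric multiplier $\Xi$: $\begin{bmatrix}L_{11}&L_{12}\\ I&0\end{bmatrix}^\top\Xi\begin{bmatrix}L_{11}&L_{12}\\ I&0\end{bmatrix}-\begin{bmatrix}L_{21}&L_{22}\end{bmatrix}^\top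 W\begin{bmatrix}L_{21}&L_{22}\end{bmatrix}\prec0$ and $\begin{bmatrix}I\\ \Delta(p)\end{bmatrix}^\top\Xi\begin{bmatrix}I\\ \Delta(p)\end{bmatrix}\succeq0$ for all $p\in\mathbb{P}$. *)

(* Kronecker products use mathcomp-real-closed's [mxtens.tensmx], whose
   index convention is the standard one: (A (x) B)_{(i*p+k),(j*q+l)} = A_ij B_kl. *)
From HB Require Import structures.
From mathcomp Require Import all_boot all_order all_algebra.
From mathcomp Require Import all_classical all_reals all_analysis.
From mathcomp Require mxtens.

Set Implicit Arguments.
Unset Strict Implicit.
Unset Printing Implicit Defensive.

Import Order.TTheory GRing.Theory Num.Theory.
Import numFieldNormedType.Exports.
Local Open Scope ring_scope.
Local Open Scope classical_set_scope.

Definition kron {R : pzRingType} {m n p q : nat}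
  (A : 'M[R]_(m, n)) (B : 'M[R]_(p, q)) : 'M[R]_(m * p, n * q) :=
  mxtens.tensmx A B.

Definition kronc {R : pzRingType} {q m n : nat}
  (v : 'cV[R]_q) (B : 'M[R]_(m, n)) : 'M[R]_(q * m, n) :=
  castmx (erefl, mul1n n) (kron v B).

Definition sym {R : realType} {n : nat} (A : 'M[R]_n) : Prop := A^T = A.
Definition posdef {R : realType} {n : nat} (A : 'M[R]_n) : Prop :=
  sym A /\ forall x : 'cV[R]_n, x != 0 -> 0 < (x^T *m A *m x) 0 0.
Definition negdef {R : realType} {n : nat} (A : 'M[R]_n) : Prop := posdef (- A).
Definition possemidef {R : realType} {n : nat} (A : 'M[R]_n) : Prop :=
  sym A /\ forall x : 'cV[R]_n, 0 <= (x^T *m A *m x) 0 0.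

Definition affp {R : pzRingType} {q a b : nat} (M0 : 'M[R]_(a, b))
  (Mi : 'I_q -> 'M[R]_(a, b)) (p : 'cV[R]_q) : 'M[R]_(a, b) :=
  M0 + \sum_(i < q) p i 0 *: Mi i.

Definition hcat {R : pzRingType} {q m n : nat} (Ki : 'I_q -> 'M[R]_(m, n))
  : 'M[R]_(m, q * n) :=
  \matrix_(i, j) Ki (mxtens.mxtens_unindex j).1 i (mxtens.mxtens_unindex j).2.

Definition convex_setP {R : realType} {q : nat} (S : set 'cV[R]_q) : Prop :=
  forall x y (t : R), S x -> S y -> 0 <= t <= 1 -> S (t *: x + (1 - t) *: y).

Fixpoint cl_traj {R : realType} {nx nu np : nat}
  (A0 : 'M[R]_nx) (Ai : 'I_np -> 'M[R]_nx)
  (B0 : 'M[R]_(nx, nu)) (Bi : 'I_np -> 'M[R]_(nx, nu))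
  (K0 : 'M[R]_(nu, nx)) (Ki : 'I_np -> 'M[R]_(nu, nx))
  (ps : nat -> 'cV[R]_np) (x0 : 'cV[R]_nx) (k : nat) : 'cV[R]_nx :=
  match k with
  | 0 => x0
  | k'.+1 => (affp A0 Ai (ps k') + affp B0 Bi (ps k') *m affp K0 Ki (ps k'))
               *m cl_traj A0 Ai B0 Bi K0 Ki ps x0 k'
  end.

Definition stabilizes {R : realType} {nx nu np : nat} (PP : set 'cV[R]_np)
  (A0 : 'M[R]_nx) (Ai : 'I_np -> 'M[R]_nx)
  (B0 : 'M[R]_(nx, nu)) (Bi : 'I_np -> 'M[R]_(nx, nu))
  (K0 : 'M[R]_(nu, nx)) (Ki : 'I_np -> 'M[R]_(nu, nx)) : Prop :=
  forall ps : nat -> 'cV[R]_np, (forall k, PP (ps k)) ->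
    (forall e : R, 0 < e -> exists2 d : R, 0 < d &
       forall x0 : 'cV[R]_nx, `|x0| < d ->
         forall k, `|cl_traj A0 Ai B0 Bi K0 Ki ps x0 k| < e)
    /\ (forall x0 : 'cV[R]_nx,
          cl_traj A0 Ai B0 Bi K0 Ki ps x0 @ \oo --> (0 : 'cV[R]_nx)).

(* Data matrices, with 0-based time: the samples are indexed 0..N, N = N_d - 1. *)
Definition dataU {R : realType} {nu : nat} (N : nat) (ud : nat -> 'cV[R]_nu)
  : 'M[R]_(nu, N) := \matrix_(i, j) ud j i 0.
Definition dataUp {R : realType} {nu np : nat} (N : nat)
  (pd : nat -> 'cV[R]_np) (ud : nat -> 'cV[R]_nu) : 'M[R]_(np * nu, N) :=
  \matrix_(i, j) kronc (pd j) (ud j) i 0.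
Definition dataX {R : realType} {nx : nat} (N : nat) (xd : nat -> 'cV[R]_nx)
  : 'M[R]_(nx, N) := \matrix_(i, j) xd j i 0.
Definition dataXp {R : realType} {nx np : nat} (N : nat)
  (pd : nat -> 'cV[R]_np) (xd : nat -> 'cV[R]_nx) : 'M[R]_(np * nx, N) :=
  \matrix_(i, j) kronc (pd j) (xd j) i 0.
Definition dataXplus {R : realType} {nx : nat} (N : nat) (xd : nat -> 'cV[R]_nx)
  : 'M[R]_(nx, N) := \matrix_(i, j) xd j.+1 i 0.
Definition dataDp {R : realType} {nx nu np : nat} (N : nat)
  (ud : nat -> 'cV[R]_nu) (pd : nat -> 'cV[R]_np) (xd : nat -> 'cV[R]_nx)
  : 'M[R]_(nx + np * nx + nu + np * nu, N) :=
  col_mx (col_mx (col_mx (dataX N xd) (dataXp N pd xd)) (dataU N ud))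
         (dataUp N pd ud).

Definition MCL {R : realType} {nx nu np : nat}
  (K0 : 'M[R]_(nu, nx)) (Ki : 'I_np -> 'M[R]_(nu, nx))
  : 'M[R]_(nx + np * nx + nu + np * nu, nx + np * nx + np * (np * nx)) :=
  col_mx (col_mx (col_mx
    (row_mx (row_mx (1%:M : 'M[R]_nx) 0) 0)
    (row_mx (row_mx 0 (kron (1%:M : 'M[R]_np) (1%:M : 'M[R]_nx))) 0))
    (row_mx (row_mx K0 (hcat Ki)) 0))
    (row_mx (row_mx 0 (kron (1%:M : 'M[R]_np) K0)) (kron (1%:M : 'M[R]_np) (hcat Ki))).

(* blkdiag(P, I (x) P, I (x) I (x) P); the last block is written
   I (x) (I (x) P), which is the same matrix (associativity of (x)). *)
Definition blkP {R : realType} {nx np : nat} (P : 'M[R]_nx)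
  : 'M[R]_(nx + np * nx + np * (np * nx)) :=
  block_mx (block_mx P 0 0 (kron (1%:M : 'M[R]_np) P)) 0
           0 (kron (1%:M : 'M[R]_np) (kron (1%:M : 'M[R]_np) P)).

Definition fullblock_lmi {R : realType} {q r t u w : nat} (PP : set 'cV[R]_q)
  (Delta : 'cV[R]_q -> 'M[R]_(t, r)) (W : 'M[R]_w)
  (L11 : 'M[R]_(r, t)) (L12 : 'M[R]_(r, u))
  (L21 : 'M[R]_(w, t)) (L22 : 'M[R]_(w, u)) (Xi : 'M[R]_(r + t)) : Prop :=
  negdef ((block_mx L11 L12 (1%:M : 'M[R]_t) 0)^T *m Xi *m block_mx L11 L12 1%:M 0
          - (row_mx L21 L22)^T *m W *m row_mx L21 L22)
  /\ forall p, PP p ->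
       possemidef ((col_mx (1%:M : 'M[R]_r) (Delta p))^T *m Xi
                   *m col_mx (1%:M : 'M[R]_r) (Delta p)).

Definition DeltaP {R : realType} {nx np : nat} (p : 'cV[R]_np)
  : 'M[R]_(np * (nx + nx)) :=
  kron (diag_mx p^T) (1%:M : 'M[R]_(nx + nx)).
Definition L11m {R : realType} (nx np : nat) : 'M[R]_(np * (nx + nx)) := 0.
Definition L12m {R : realType} (nx np : nat) : 'M[R]_(np * (nx + nx), nx + nx) :=
  kronc (const_mx 1 : 'cV[R]_np) (1%:M : 'M[R]_(nx + nx)).
Definition L21m {R : realType} (nx np : nat)
  : 'M[R]_(nx + np * nx + (nx + np * nx), np * (nx + nx)) :=
  col_mx
    (col_mx (0 : 'M[R]_(nx, np * (nx + nx)))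
            (kron (1%:M : 'M[R]_np) (row_mx (1%:M : 'M[R]_nx) (0 : 'M[R]_nx))))
    (col_mx (0 : 'M[R]_(nx, np * (nx + nx)))
            (kron (1%:M : 'M[R]_np) (row_mx (0 : 'M[R]_nx) (1%:M : 'M[R]_nx)))).
Definition L22m {R : realType} (nx np : nat)
  : 'M[R]_(nx + np * nx + (nx + np * nx), nx + nx) :=
  col_mx
    (col_mx (row_mx (1%:M : 'M[R]_nx) (0 : 'M[R]_nx))
            (kronc (const_mx 1 : 'cV[R]_np) (0 : 'M[R]_(nx, nx + nx))))
    (col_mx (row_mx (0 : 'M[R]_nx) (1%:M : 'M[R]_nx))
            (kronc (const_mx 1 : 'cV[R]_np) (0 : 'M[R]_(nx, nx + nx)))).
Definition P0m {R : realType} {nx : nat} (np : nat) (P : 'M[R]_nx)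
  : 'M[R]_(nx + np * nx) := block_mx P 0 0 (0 : 'M[R]_(np * nx)).
Definition Xplusblk {R : realType} {nx N : nat} (np : nat) (Xplus : 'M[R]_(nx, N))
  : 'M[R]_(nx + np * nx, N + np * N) :=
  block_mx Xplus 0 0 (kron (1%:M : 'M[R]_np) Xplus).
Definition Wm {R : realType} {nx N : nat} (np : nat) (P : 'M[R]_nx)
  (Xplus : 'M[R]_(nx, N)) (FQ : 'M[R]_(N + np * N, nx + np * nx))
  : 'M[R]_(nx + np * nx + (nx + np * nx)) :=
  block_mx (P0m np P) (Xplusblk np Xplus *m FQ)
           (Xplusblk np Xplus *m FQ)^T (P0m np P).

(* The data equation gives X_+ = [A_0 A_1 .. A_np B_0 B_1 .. B_np] D_p.  With
   E(p) = [I; p (x) I] and Z(p) = [I; p (x) I; p (x) p (x) I] one has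
   blkdiag(P, I (x) P, I (x) I (x) P) Z(p) = Z(p) P and
   [A_0 .. B_np] M_CL Z(p) = A(p) + B(p) K(p) = A_cl(p), so the data condition
   M_CL blkdiag(...) = D_p F turns into A_cl(p) P = E(p)^T calX_+ F_Q E(p).
   Testing the first full-block LMI with (Delta(p) L12 v; v) makes the
   multiplier term an instance of the second, nonnegative, LMI and the W term
   the form v^T [P, A_cl P; (A_cl P)^T, P] v, which therefore dominates
   c |v_2|^2 uniformly on PP.  For v = (- P^-1 A_cl x, P^-1 x) this says that
   V(x) = x^T P^-1 x shrinks by a fixed factor rho < 1 at every closed-loop
   step, whence exponential, and so asymptotic, stability. *)

From HB Require Import structures.
From mathcomp Require Import all_boot all_order all_algebra.
From mathcomp Require Import all_classical all_reals all_analysis.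
From mathcomp Require mxtens.
From mathcomp Require Import ring lra.
Import Order.TTheory GRing.Theory Num.Theory.
Import numFieldNormedType.Exports.
Local Open Scope ring_scope.
Local Open Scope classical_set_scope.

Section Kronecker.
Context {R : comPzRingType}.
Local Notation tidx := mxtens.mxtens_index.

Lemma big_mxtens_index q m (F : 'I_(q * m) -> R) :
  \sum_(k < q * m) F k = \sum_(i < q) \sum_(j < m) F (tidx (i, j)).
Proof.
rewrite (reindex (@tidx q m)) /=; first by rewrite pair_big; apply: eq_bigr => -[].
by exists (@mxtens.mxtens_unindex q m) => x _;
  [exact: mxtens.mxtens_indexK | exact: mxtens.mxtens_unindexK].
Qed.

Lemma kroncE q m n (v : 'cV[R]_q) (C : 'M[R]_(m, n)) i j k :
  kronc v C (tidx (i, j)) k = v i 0 * C j k.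
Proof.
rewrite castmxE /= (_ : cast_ord _ _ = tidx (i, j)); last exact: val_inj.
rewrite mxE mxtens.mxtens_indexK /=.
by congr (v i _ * C j _); apply: val_inj; rewrite /= ?divn_small ?modn_small.
Qed.

Lemma hcatE q m n (M : 'I_q -> 'M[R]_(m, n)) a i j :
  hcat M a (tidx (i, j)) = M i a j.
Proof. by rewrite mxE mxtens.mxtens_indexK. Qed.

Lemma kronc_matrixP q m n (A B : 'M[R]_(q * m, n)) :
  (forall i j k, A (tidx (i, j)) k = B (tidx (i, j)) k) -> A = B.
Proof. by move=> AB; apply/matrixP => r k; case: (mxtens.mxtens_indexP r). Qed.

Lemma mulmx_kronc q m n p (v : 'cV[R]_q) (C : 'M[R]_(m, n)) (D : 'M[R]_(n, p)) :
  kronc v C *m D = kronc v (C *m D).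
Proof.
apply: kronc_matrixP => i j k; rewrite kroncE !mxE big_distrr /=.
by apply: eq_bigr => l _; rewrite kroncE mulrA.
Qed.

Lemma mul_kron_kronc q q' m m' n (A : 'M[R]_(q', q)) (B : 'M[R]_(m', m))
    (v : 'cV[R]_q) (C : 'M[R]_(m, n)) :
  kron A B *m kronc v C = kronc (A *m v) (B *m C).
Proof.
apply: kronc_matrixP => i j k; rewrite kroncE !mxE big_mxtens_index big_distrl /=.
apply: eq_bigr => a _; rewrite big_distrr /=; apply: eq_bigr => b _.
by rewrite mxtens.tensmxE kroncE; ring.
Qed.

Lemma mul_hcat_kronc q m n p (M : 'I_q -> 'M[R]_(m, n)) (v : 'cV[R]_q)
    (C : 'M[R]_(n, p)) :
  hcat M *m kronc v C = \sum_(i < q) v i 0 *: (M i *m C).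
Proof.
apply/matrixP => a b; rewrite !mxE summxE big_mxtens_index; apply: eq_bigr => i _.
rewrite !mxE big_distrr /=; apply: eq_bigr => j _.
by rewrite hcatE kroncE; ring.
Qed.

Lemma kroncDr q m n (v : 'cV[R]_q) (C D : 'M[R]_(m, n)) :
  kronc v (C + D) = kronc v C + kronc v D.
Proof. by apply: kronc_matrixP => i j k; rewrite !mxE !kroncE !mxE mulrDr. Qed.

Lemma kronc0r q m n (v : 'cV[R]_q) : kronc v (0 : 'M[R]_(m, n)) = 0.
Proof. by apply: kronc_matrixP => i j k; rewrite kroncE !mxE mulr0. Qed.

Lemma mulmx_affp {q m n p} (M0 : 'M[R]_(m, n)) (Mi : 'I_q -> 'M[R]_(m, n))
    (v : 'cV[R]_q) (Y : 'M[R]_(n, p)) :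
  affp M0 Mi v *m Y = M0 *m Y + hcat Mi *m kronc v Y.
Proof.
rewrite mulmxDl mul_hcat_kronc mulmx_suml; congr (_ + _).
by apply: eq_bigr => i _; rewrite scalemxAl.
Qed.

End Kronecker.

(* [pmon1 n p] and [pmon2 n p] are E(p) and Z(p) above. *)
Definition pmon1 {R : pzRingType} {q : nat} (n : nat) (p : 'cV[R]_q)
  : 'M[R]_(n + q * n, n) :=
  col_mx 1%:M (kronc p 1%:M).

Definition pmon2 {R : pzRingType} {q : nat} (n : nat) (p : 'cV[R]_q)
  : 'M[R]_(n + q * n + q * (q * n), n) :=
  col_mx (pmon1 n p) (kronc p (kronc p 1%:M)).

Lemma mulmx_colE {R : pzRingType} {m n k} (A : 'M[R]_(m, n)) (B : 'M[R]_(n, k)) i j :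
  (A *m B) i j = (A *m col j B) i 0.
Proof. by rewrite !mxE; apply: eq_bigr => l _; rewrite !mxE. Qed.

Lemma col_matrix_seq {R : Type} {m N} (g : nat -> 'cV[R]_m) (j : 'I_N) :
  col j (\matrix_(i, j) g j i 0 : 'M[R]_(m, N)) = g j.
Proof. by apply/matrixP => a b; rewrite !mxE [b]ord1. Qed.

Section ClosedLoop.
Context {R : realType} {nx nu np : nat}.
Variables (A0 : 'M[R]_nx) (Ai : 'I_np -> 'M[R]_nx)
  (B0 : 'M[R]_(nx, nu)) (Bi : 'I_np -> 'M[R]_(nx, nu))
  (K0 : 'M[R]_(nu, nx)) (Ki : 'I_np -> 'M[R]_(nu, nx)).

Definition sysmx : 'M[R]_(nx, nx + np * nx + nu + np * nu) :=
  row_mx (row_mx (row_mx A0 (hcat Ai)) B0) (hcat Bi).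

Definition clmx (p : 'cV[R]_np) : 'M[R]_nx :=
  affp A0 Ai p + affp B0 Bi p *m affp K0 Ki p.

Lemma mul_sysmx_kronc m (p : 'cV[R]_np) (Y : 'M[R]_(nx, m)) (U : 'M[R]_(nu, m)) :
  sysmx *m col_mx (col_mx (col_mx Y (kronc p Y)) U) (kronc p U)
  = affp A0 Ai p *m Y + affp B0 Bi p *m U.
Proof. by rewrite !mul_row_col !mulmx_affp !addrA. Qed.

Lemma mul_MCL_pmon2 (p : 'cV[R]_np) :
  MCL K0 Ki *m pmon2 nx p = col_mx (col_mx (col_mx 1%:M (kronc p 1%:M))
    (affp K0 Ki p)) (kronc p (affp K0 Ki p)).
Proof.
rewrite /MCL /pmon2 /pmon1 !mul_col_mx !mul_row_col !mul0mx !addr0 !add0r mulmx1.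
rewrite !mul_kron_kronc !mul1mx !mulmx1 -kroncDr.
by rewrite -[affp K0 Ki p]mulmx1 mulmx_affp mulmx1.
Qed.

Lemma mul_sysmx_MCL_pmon2 (p : 'cV[R]_np) :
  sysmx *m (MCL K0 Ki *m pmon2 nx p) = clmx p.
Proof. by rewrite mul_MCL_pmon2 mul_sysmx_kronc mulmx1. Qed.

Lemma mul_blkP_pmon2 (P : 'M[R]_nx) (p : 'cV[R]_np) :
  blkP P *m pmon2 nx p = pmon2 nx p *m P.
Proof.
rewrite /blkP /pmon2 /pmon1 !mul_block_col !mul_col_mx !mul0mx !addr0 !add0r.
by rewrite !mul_kron_kronc !mulmx_kronc !mul1mx !mulmx1.
Qed.

Lemma dataXplus_sysmx N (ud : nat -> 'cV[R]_nu) (pd : nat -> 'cV[R]_np)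
    (xd : nat -> 'cV[R]_nx) :
  (forall k, (k < N)%N ->
     xd k.+1 = affp A0 Ai (pd k) *m xd k + affp B0 Bi (pd k) *m ud k) ->
  dataXplus N xd = sysmx *m dataDp N ud pd xd.
Proof.
move=> step; apply/matrixP => i j; rewrite mulmx_colE !col_col_mx.
rewrite !(col_matrix_seq xd) !(col_matrix_seq ud).
rewrite !(col_matrix_seq (fun j => kronc (pd j) (xd j))).
rewrite !(col_matrix_seq (fun j => kronc (pd j) (ud j))).
by rewrite mul_sysmx_kronc -step // mxE.
Qed.

End ClosedLoop.

Definition bform {R : pzRingType} {m n : nat} (M : 'M[R]_(m, n))
  (a : 'cV[R]_m) (b : 'cV[R]_n) : R :=
  (a^T *m M *m b) 0 0.

Definition qform {R : pzRingType} {n : nat} (M : 'M[R]_n) (x : 'cV[R]_n) : R :=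
  bform M x x.

Lemma mxentryD {V : nmodType} {m n} (A B : 'M[V]_(m, n)) i j :
  (A + B) i j = A i j + B i j.
Proof. by rewrite mxE. Qed.

Lemma mxentryN {V : zmodType} {m n} (A : 'M[V]_(m, n)) i j : (- A) i j = - A i j.
Proof. by rewrite mxE. Qed.

Lemma mxentryZ {R : pzRingType} {m n} (a : R) (A : 'M[R]_(m, n)) i j :
  (a *: A) i j = a * A i j.
Proof. by rewrite mxE. Qed.

Section QuadraticForms.
Context {R : comPzRingType}.

Lemma bform_mulmx m n m' n' (X : 'M[R]_(m, m')) (M : 'M[R]_(m, n))
    (Y : 'M[R]_(n, n')) a b :
  bform M (X *m a) (Y *m b) = bform (X^T *m M *m Y) a b.
Proof. by rewrite /bform trmx_mul !mulmxA. Qed.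

Lemma qform_mulmx m n (X : 'M[R]_(m, n)) (M : 'M[R]_m) x :
  qform M (X *m x) = qform (X^T *m M *m X) x.
Proof. exact: bform_mulmx. Qed.

Lemma bform_trmx m n (M : 'M[R]_(m, n)) a b : bform M^T a b = bform M b a.
Proof. by rewrite /bform -[b in LHS]trmxK -!trmx_mul mxE mulmxA. Qed.

Lemma bformNl m n (M : 'M[R]_(m, n)) a b : bform M (- a) b = - bform M a b.
Proof. by rewrite /bform linearN /= !mulNmx mxentryN. Qed.

Lemma qformN n (M : 'M[R]_n) x : qform M (- x) = qform M x.
Proof. by rewrite /qform bformNl /bform mulmxN mxentryN opprK. Qed.

Lemma qformZ n (M : 'M[R]_n) a x : qform M (a *: x) = a ^+ 2 * qform M x.
Proof.
by rewrite /qform /bform !linearZ /= -!scalemxAl scalerA mxentryZ expr2.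
Qed.

Lemma qformB n (A B : 'M[R]_n) x : qform (A - B) x = qform A x - qform B x.
Proof. by rewrite /qform /bform mulmxBr mulmxBl mxentryD mxentryN. Qed.

Lemma qform_block_mx m n (A : 'M[R]_m) B C (D : 'M[R]_n) a b :
  qform (block_mx A B C D) (col_mx a b)
  = qform A a + bform B a b + bform C b a + qform D b.
Proof.
rewrite /qform /bform tr_col_mx mul_row_block mul_row_col !mulmxDl !mxentryD.
by rewrite !addrA; congr (_ + _); exact: addrAC.
Qed.

End QuadraticForms.

Definition clP_data {R : realType} {nx N np : nat} (X : 'M[R]_(nx, N))
  (FQ : 'M[R]_(N + np * N, nx + np * nx)) (p : 'cV[R]_np) : 'M[R]_nx :=
  (pmon1 nx p)^T *m (Xplusblk np X *m FQ) *m pmon1 nx p.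

Section FullBlockAlgebra.
Context {R : realType} {nx np : nat}.
Implicit Types (p : 'cV[R]_np) (P : 'M[R]_nx).

Lemma mulmx_tr_pmon1 N (X : 'M[R]_(nx, N)) p :
  X *m (pmon1 N p)^T = (pmon1 nx p)^T *m Xplusblk np X.
Proof.
rewrite /pmon1 /Xplusblk !tr_col_mx mul_mx_row mul_row_block !mulmx0 !addr0 add0r.
rewrite !trmx1 mulmx1 mul1mx; congr row_mx; apply: trmx_inj.
rewrite !trmx_mul !trmxK mxtens.trmx_tens trmx1 mul_kron_kronc mulmx_kronc.
by rewrite !mul1mx mulmx1.
Qed.

Lemma clmx_mul_data {nu N} {A0 : 'M[R]_nx} {Ai} {B0 : 'M[R]_(nx, nu)} {Bi K0 Ki P}
    {D : 'M[R]_(nx + np * nx + nu + np * nu, N)} {X : 'M[R]_(nx, N)} {F FQ p} :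
  X = sysmx A0 Ai B0 Bi *m D -> MCL K0 Ki *m blkP P = D *m F ->
  F *m pmon2 nx p = (pmon1 N p)^T *m FQ *m pmon1 nx p ->
  clmx A0 Ai B0 Bi K0 Ki p *m P = clP_data X FQ p.
Proof.
move=> XE HM HF.
rewrite -mul_sysmx_MCL_pmon2 -!mulmxA -mul_blkP_pmon2 (mulmxA (MCL K0 Ki)) HM.
by rewrite -mulmxA HF !mulmxA -XE mulmx_tr_pmon1 /clP_data !mulmxA.
Qed.

Lemma mul_DeltaP_L12 p (v : 'cV[R]_(nx + nx)) :
  DeltaP p *m (L12m nx np *m v) = kronc p v.
Proof.
have diag_p1 : diag_mx p^T *m const_mx 1 = p.
  by apply/matrixP => i j; rewrite mul_diag_mx !mxE [j]ord1 mulr1.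
by rewrite /L12m mulmx_kronc mul1mx /DeltaP mul_kron_kronc diag_p1 mul1mx.
Qed.

Lemma mul_L1_col p (v : 'cV[R]_(nx + nx)) :
  block_mx (L11m nx np) (L12m nx np) 1%:M 0 *m
    col_mx (DeltaP p *m (L12m nx np *m v)) v
  = col_mx 1%:M (DeltaP p) *m (L12m nx np *m v).
Proof. by rewrite mul_block_col /L11m !mul0mx add0r addr0 mul1mx mul_col_mx mul1mx. Qed.

Lemma mul_L2_col p (v1 v2 : 'cV[R]_nx) :
  row_mx (L21m nx np) (L22m nx np) *m
    col_mx (DeltaP p *m (L12m nx np *m col_mx v1 v2)) (col_mx v1 v2)
  = col_mx (pmon1 nx p *m v1) (pmon1 nx p *m v2).
Proof.
rewrite mul_row_col mul_DeltaP_L12 /L21m /L22m /pmon1 !mul_col_mx !mul_kron_kronc.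
rewrite !kronc0r !mul0mx !mul_row_col !mul1mx !mul0mx !addr0 !add0r !add_col_mx.
by rewrite !addr0 !add0r !mulmx_kronc !mul1mx.
Qed.

Lemma tr_pmon1_P0m P p : (pmon1 nx p)^T *m P0m np P *m pmon1 nx p = P.
Proof.
rewrite /pmon1 /P0m tr_col_mx mul_row_block !mulmx0 !addr0 trmx1 mul1mx.
by rewrite mul_row_col mulmx1 mul0mx addr0.
Qed.

Lemma qform_Wm_pmon1 P N (X : 'M[R]_(nx, N)) (FQ : 'M[R]_(N + np * N, nx + np * nx))
    p (v1 v2 : 'cV[R]_nx) :
  qform (Wm P X FQ) (col_mx (pmon1 nx p *m v1) (pmon1 nx p *m v2))
  = qform (block_mx P (clP_data X FQ p) (clP_data X FQ p)^T P) (col_mx v1 v2).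
Proof.
rewrite /Wm !qform_block_mx !qform_mulmx !bform_mulmx !tr_pmon1_P0m.
by rewrite /clP_data !trmx_mul trmxK !mulmxA.
Qed.

End FullBlockAlgebra.

Section MatrixNorm.
Context {R : realDomainType}.

Lemma normr_entry_le {m n} (A : 'M[R]_(m, n)) i j : `|A i j| <= `|A|.
Proof.
by rewrite [leRHS]/Num.norm /= mx_normrE; apply/bigmax_geP; right; exists (i, j).
Qed.

Lemma mx_norm_le {m n} (A : 'M[R]_(m, n)) c :
  0 <= c -> (forall i j, `|A i j| <= c) -> `|A| <= c.
Proof.
by move=> c_ge0 Ac; rewrite [leLHS]/Num.norm /= mx_normrE; apply: bigmax_le => // -[].
Qed.

Lemma norm_trmx {m n} (A : 'M[R]_(m, n)) : `|A^T| = `|A|.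
Proof.
apply/le_anti/andP; split; apply: mx_norm_le => // i j; rewrite ?mxE.
  exact: normr_entry_le.
by have := normr_entry_le A^T j i; rewrite mxE.
Qed.

Lemma norm_col_mxd {m1 m2 n} (a : 'M[R]_(m1, n)) (b : 'M[R]_(m2, n)) :
  `|b| <= `|col_mx a b|.
Proof. by apply: mx_norm_le => // i j; rewrite -(col_mxEd a) normr_entry_le. Qed.

End MatrixNorm.

Section PositiveDefinite.
Context {R : realType}.

Lemma qformE n (M : 'M[R]_n) x :
  qform M x = \sum_j \sum_i x i 0 * M i j * x j 0.
Proof.
rewrite /qform /bform mxE; apply: eq_bigr => j _; rewrite mxE big_distrl /=.
by apply: eq_bigr => i _; rewrite !mxE.
Qed.

Lemma qform_le_norm {n} (M : 'M[R]_n) :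
  exists2 L, 0 <= L & forall x, qform M x <= L * `|x| ^+ 2.
Proof.
exists (\sum_j \sum_i `|M i j|); first by do 2 apply: sumr_ge0 => ? _.
move=> x; rewrite qformE big_distrl /=; apply: ler_sum => j _.
rewrite big_distrl /=; apply: ler_sum => i _.
apply: le_trans (ler_norm _) _; rewrite !normrM mulrAC mulrC ler_wpM2l //.
by rewrite expr2 ler_pM // normr_entry_le.
Qed.

Lemma continuous_qform_trmx {n} (M : 'M[R]_n) :
  continuous (fun v : 'rV[R]_n => qform M v^T).
Proof.
have term_cont (i j : 'I_n) :
    continuous (fun v : 'rV[R]_n => v 0 i * M i j * v 0 j).
  move=> v; apply: (@continuousM _ _ (fun v : 'rV[R]_n => v 0 i * M i j)
    (fun v => v 0 j)); last exact: coord_continuous.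
  apply: (@continuousM _ _ (fun v : 'rV[R]_n => v 0 i) (fun=> M i j)).
    exact: coord_continuous.
  exact: cst_continuous.
have -> : (fun v : 'rV[R]_n => qform M v^T)
    = fun v => \sum_j \sum_i v 0 i * M i j * v 0 j.
  by apply: funext => v; rewrite qformE; do 2 apply: eq_bigr => ? _; rewrite !mxE.
apply: continuous_big => [|j _]; first exact: add_continuous.
by apply: continuous_big => [|i _]; [exact: add_continuous | exact: term_cont].
Qed.

Lemma compact_unit_sphere n : compact [set v : 'rV[R]_n | `|v| = 1].
Proof.
apply: bounded_closed_compact.
  by exists 1; split; [exact: num_real | move=> y y_gt1 v /= ->; exact: ltW].
apply: (@preimage_closed _ _ (@Num.norm _ 'rV[R]_n) [set x | x = 1]).
  by move=> v _; exact: norm_continuous.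
exact: closed_eq.
Qed.

(* The form attains a positive minimum on the (compact) unit sphere of the
   max norm; homogeneity does the rest. *)
Lemma posdef_qform_ge {n} {M : 'M[R]_n} :
  posdef M -> exists2 c, 0 < c & forall x, c * `|x| ^+ 2 <= qform M x.
Proof.
case: n M => [|n] M [_ M_pos].
  exists 1 => // x.
  by rewrite [x]flatmx0 normr0 expr0n mulr0 /qform /bform !mxE big_ord0.
set S := [set v : 'rV[R]_n.+1 | `|v| = 1].
have S_nonempty : S !=set0.
  exists (`|const_mx 1 : 'rV[R]_n.+1|^-1 *: const_mx 1); apply: normrZV.
  rewrite unitfE normr_eq0; apply/eqP => /matrixP /(_ 0 0).
  by rewrite !mxE; apply/eqP; exact: oner_neq0.
have [v0 /set_mem S_v0 v0_min] := compact_EVT_min S_nonempty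
  (compact_unit_sphere n.+1) (continuous_subspaceT (continuous_qform_trmx M)).
exists (qform M v0^T).
  apply: M_pos; apply/eqP => /(congr1 trmx); rewrite trmxK trmx0 => v0_0.
  by move: S_v0; rewrite /S /= v0_0 normr0 => /eqP; rewrite eq_sym oner_eq0.
move=> x; have [->|x_neq0] := eqVneq x 0.
  by rewrite normr0 expr0n mulr0 /qform /bform trmx0 !mul0mx mxE.
have x_gt0 : 0 < `|x| by rewrite normr_gt0.
have S_x : S (`|x|^-1 *: x^T).
  by rewrite /S /= normrZ norm_trmx normfV normr_id mulVf ?gt_eqF.
have := v0_min _ (mem_set S_x); rewrite linearZ /= trmxK qformZ.
move=> /(ler_wpM2r (sqr_ge0 `|x|)).
by rewrite mulrAC -exprMn mulVf ?gt_eqF // expr1n mul1r.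
Qed.

End PositiveDefinite.

Section Inverse.
Context {R : realType} {n : nat}.
Implicit Types P : 'M[R]_n.

Lemma posdef_unitmx {P} : posdef P -> P \in unitmx.
Proof.
move=> [_ P_pos]; rewrite unitmxE unitfE; apply/negP => /det0P [v v_neq0 vP].
have : 0 < qform P v^T.
  apply: P_pos; apply: contra v_neq0 => /eqP /(congr1 trmx).
  by rewrite trmxK trmx0 => ->.
by rewrite /qform /bform trmxK vP mul0mx mxE ltxx.
Qed.

Lemma qform_invmx P x : sym P -> P \in unitmx ->
  qform P (invmx P *m x) = qform (invmx P) x.
Proof.
by move=> P_sym P_unit; rewrite qform_mulmx trmx_inv P_sym mulVmx // mul1mx.
Qed.

Lemma posdef_invmx {P} : posdef P -> posdef (invmx P).
Proof.
move=> P_pd; have P_unit := posdef_unitmx P_pd; have [P_sym P_pos] := P_pd.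
split; first by rewrite /sym trmx_inv P_sym.
move=> x x_neq0; rewrite -[_ 0 0]/(qform _ x) -qform_invmx //; apply: P_pos.
apply: contra x_neq0 => /eqP /(congr1 (mulmx P)).
by rewrite mulmxA mulmxV // mul1mx mulmx0 => ->.
Qed.

End Inverse.

Lemma fullblock_lmi_dissipation {R : realType} {nx np N : nat} {PP : set 'cV[R]_np}
    {P : 'M[R]_nx} {X : 'M[R]_(nx, N)} {FQ : 'M[R]_(N + np * N, nx + np * nx)} {Xi} :
  fullblock_lmi PP (@DeltaP R nx np) (Wm P X FQ)
    (L11m nx np) (L12m nx np) (L21m nx np) (L22m nx np) Xi ->
  exists2 c, 0 < c & forall p, PP p -> forall v1 v2 : 'cV[R]_nx,
    c * `|v2| ^+ 2
    <= qform (block_mx P (clP_data X FQ p) (clP_data X FQ p)^T P) (col_mx v1 v2).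
Proof.
move=> [lmi_neg lmi_psd]; have [c c_gt0 lmi_c] := posdef_qform_ge lmi_neg.
exists c => // p PPp v1 v2.
set v := col_mx v1 v2; set z := col_mx (DeltaP p *m (L12m nx np *m v)) v.
have Xi_ge0 : 0 <= qform Xi (col_mx 1%:M (DeltaP p) *m (L12m nx np *m v)).
  by rewrite qform_mulmx; exact: (lmi_psd p PPp).2.
have v2_le_z : `|v2| <= `|z| := le_trans (norm_col_mxd v1 v2) (norm_col_mxd _ v).
have : c * `|v2| ^+ 2 <= c * `|z| ^+ 2.
  by rewrite ler_wpM2l ?(ltW c_gt0) // lerXn2r ?nnegrE.
move: (lmi_c z); rewrite opprB qformB -!qform_mulmx mul_L1_col mul_L2_col.
rewrite qform_Wm_pmon1; lra.
Qed.

Definition asympt_stable {R : realType} {n : nat} (T : 'cV[R]_n -> nat -> 'cV[R]_n)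
  : Prop :=
  (forall e : R, 0 < e -> exists2 d : R, 0 < d &
     forall x0 : 'cV[R]_n, `|x0| < d -> forall k, `|T x0 k| < e)
  /\ (forall x0 : 'cV[R]_n, T x0 @ \oo --> (0 : 'cV[R]_n)).

Section Lyapunov.
Context {R : realType} {n : nat}.
Implicit Types (P A : 'M[R]_n) (T : 'cV[R]_n -> nat -> 'cV[R]_n).

Lemma exp_bound_asympt_stable {T} {C s : R} : 0 <= C -> 0 <= s < 1 ->
  (forall x0 k, `|T x0 k| <= C * s ^+ k * `|x0|) -> asympt_stable T.
Proof.
move=> C_ge0 /andP[s_ge0 s_lt1] bound; split.
  have C1_gt0 : 0 < C + 1 by rewrite ltr_wpDl.
  move=> e e_gt0; exists (e / (C + 1)); first by rewrite divr_gt0.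
  move=> x0; rewrite ltr_pdivlMr // => x0_lt k; apply: le_lt_trans (bound x0 k) _.
  have : C * s ^+ k * `|x0| <= C * `|x0|.
    by rewrite ler_wpM2r // ler_piMr // exprn_ile1 // ltW.
  have := normr_ge0 x0; nra.
move=> x0; apply: norm_cvg0.
apply: (@squeeze_cvgr _ _ _ _ (cst 0) (fun k => C * `|x0| * s ^+ k)).
- by near=> k; rewrite normr_ge0 mulrAC bound.
- exact: cvg_cst.
- rewrite -[X in _ --> X](mulr0 (C * `|x0|)); apply: cvgM; first exact: cvg_cst.
  by apply: cvg_expr; rewrite ger0_norm.
Unshelve. all: by end_near.
Qed.

Lemma lyapunov_step {P A c} : posdef P ->
  (forall v1 v2,
     c * `|v2| ^+ 2 <= qform (block_mx P (A *m P) (A *m P)^T P) (col_mx v1 v2)) ->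
  forall x,
    qform (invmx P) (A *m x) + c * `|invmx P *m x| ^+ 2 <= qform (invmx P) x.
Proof.
move=> P_pd diss x; have P_unit := posdef_unitmx P_pd; have P_sym := P_pd.1.
have := diss (- (invmx P *m (A *m x))) (invmx P *m x).
rewrite qform_block_mx bform_trmx bformNl qformN !qform_invmx //.
have -> : bform (A *m P) (invmx P *m (A *m x)) (invmx P *m x)
    = qform (invmx P) (A *m x).
  by rewrite bform_mulmx trmx_inv P_sym -!mulmxA mulmxV // mulmx1 /qform /bform !mulmxA.
lra.
Qed.

(* [qform (invmx P) x = qform P (invmx P *m x)] is at most [L |invmx P *m x|^2],
   so the decrease [c |invmx P *m x|^2] of [lyapunov_step] is at least the
   fraction [c / (L + c)] of it. *)
Lemma lyapunov_contraction {P c} : posdef P -> 0 < c ->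
  exists2 rho, 0 <= rho < 1 & forall A,
    (forall v1 v2,
       c * `|v2| ^+ 2 <= qform (block_mx P (A *m P) (A *m P)^T P) (col_mx v1 v2)) ->
    forall x, qform (invmx P) (A *m x) <= rho * qform (invmx P) x.
Proof.
move=> P_pd c_gt0; have [L L_ge0 P_le] := qform_le_norm P.
have Lc_gt0 : 0 < L + c by rewrite ltr_wpDl.
set t := c / (L + c); have t_ge0 : 0 <= t by rewrite divr_ge0 ?ltW.
have tL_le_c : t * L <= c.
  rewrite -[leRHS](divfK (lt0r_neq0 Lc_gt0)) -/t.
  by rewrite ler_wpM2l // lerDl ltW.
exists (1 - t).
  by rewrite subr_ge0 ler_pdivrMr // mul1r lerDr L_ge0 /= ltrBlDl ltrDr divr_gt0.
move=> A diss x; have step := lyapunov_step P_pd diss x.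
have V_le : t * qform (invmx P) x <= c * `|invmx P *m x| ^+ 2.
  rewrite -qform_invmx; [|exact: P_pd.1|exact: posdef_unitmx].
  apply: le_trans (ler_wpM2l t_ge0 (P_le _)) _.
  by rewrite mulrA ler_wpM2r ?exprn_ge0.
lra.
Qed.

Lemma qform_exp_bound {Q} {rho : R} {T} : posdef Q -> 0 <= rho ->
  (forall x0, T x0 0 = x0) ->
  (forall x0 k, qform Q (T x0 k.+1) <= rho * qform Q (T x0 k)) ->
  exists2 C, 0 <= C & forall x0 k, `|T x0 k| <= C * Num.sqrt rho ^+ k * `|x0|.
Proof.
move=> Q_pd rho_ge0 T0 decr; have [a a_gt0 Q_ge] := posdef_qform_ge Q_pd.
have [b b_ge0 Q_le] := qform_le_norm Q.
exists (Num.sqrt (b / a)); first exact: sqrtr_ge0.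
move=> x0 k.
have decay : qform Q (T x0 k) <= rho ^+ k * qform Q x0.
  elim: k => [|k IH]; first by rewrite T0 expr0 mul1r.
  by rewrite exprS -mulrA; apply: le_trans (decr x0 k) (ler_wpM2l rho_ge0 IH).
rewrite -(ler_pXn2r (_ : 0 < 2)%N) ?nnegrE ?mulr_ge0 ?exprn_ge0 ?sqrtr_ge0 //.
rewrite !exprMn exprAC (sqr_sqrtr rho_ge0) (sqr_sqrtr (divr_ge0 b_ge0 (ltW a_gt0))).
rewrite (_ : _ * _ * _ = a^-1 * (rho ^+ k * (b * `|x0| ^+ 2))); last by ring.
rewrite ler_pdivlMl //.
apply: le_trans (Q_ge _) (le_trans decay _).
by apply: ler_wpM2l; [exact: exprn_ge0 | exact: Q_le].
Qed.

Lemma lyapunov_asympt_stable P c (A : nat -> 'M[R]_n) T : posdef P -> 0 < c ->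
  (forall k v1 v2, c * `|v2| ^+ 2
     <= qform (block_mx P (A k *m P) (A k *m P)^T P) (col_mx v1 v2)) ->
  (forall x0, T x0 0 = x0) -> (forall x0 k, T x0 k.+1 = A k *m T x0 k) ->
  asympt_stable T.
Proof.
move=> P_pd c_gt0 diss T0 TS.
have [rho /andP[rho_ge0 rho_lt1] contr] := lyapunov_contraction P_pd c_gt0.
have [C C_ge0 bound] : exists2 C, 0 <= C &
    forall x0 k, `|T x0 k| <= C * Num.sqrt rho ^+ k * `|x0|.
  apply: qform_exp_bound (posdef_invmx P_pd) rho_ge0 T0 _ => x0 k.
  by rewrite TS; exact: contr.
apply: exp_bound_asympt_stable C_ge0 _ bound.
by rewrite sqrtr_ge0 /= -sqrtr1 ltr_sqrt.
Qed.

End Lyapunov.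

Theorem theorem2 (R : realType) (nx nu np N : nat)
  (PP : set 'cV[R]_np) (PP_compact : compact PP) (PP_convex : convex_setP PP)
  (A0 : 'M[R]_nx) (Ai : 'I_np -> 'M[R]_nx)
  (B0 : 'M[R]_(nx, nu)) (Bi : 'I_np -> 'M[R]_(nx, nu))
  (ud : nat -> 'cV[R]_nu) (pd : nat -> 'cV[R]_np) (xd : nat -> 'cV[R]_nx)
  (Hdata : forall k, (k < N)%N ->
     PP (pd k) /\ xd k.+1 = affp A0 Ai (pd k) *m xd k + affp B0 Bi (pd k) *m ud k)
  (Hrank : row_free (dataDp N ud pd xd))
  (K0 : 'M[R]_(nu, nx)) (Ki : 'I_np -> 'M[R]_(nu, nx))
  (P : 'M[R]_nx)
  (F : 'M[R]_(N, nx + np * nx + np * (np * nx)))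
  (FQ : 'M[R]_(N + np * N, nx + np * nx))
  (Xi : 'M[R]_(np * (nx + nx) + np * (nx + nx))) :
  posdef P ->
  (forall p : 'cV[R]_np, PP p ->
     F *m col_mx (col_mx (1%:M : 'M[R]_nx) (kronc p (1%:M : 'M[R]_nx)))
                 (kronc p (kronc p (1%:M : 'M[R]_nx)))
     = (col_mx (1%:M : 'M[R]_N) (kronc p (1%:M : 'M[R]_N)))^T *m FQ
         *m col_mx (1%:M : 'M[R]_nx) (kronc p (1%:M : 'M[R]_nx))) ->
  sym Xi ->
  MCL K0 Ki *m blkP P = dataDp N ud pd xd *m F ->
  fullblock_lmi PP (@DeltaP R nx np) (@Wm R nx N np P (dataXplus N xd) FQ)
    (@L11m R nx np) (@L12m R nx np) (@L21m R nx np) (@L22m R nx np) Xi ->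
  stabilizes PP A0 Ai B0 Bi K0 Ki.
Proof.
move=> P_pd F_FQ _ MCL_F lmi ps ps_in.
have Xplus_sys : dataXplus N xd = sysmx A0 Ai B0 Bi *m dataDp N ud pd xd.
  by apply: dataXplus_sysmx => k /Hdata[].
have [c c_gt0 diss] := fullblock_lmi_dissipation lmi.
apply: (@lyapunov_asympt_stable _ _ P c (fun k => clmx A0 Ai B0 Bi K0 Ki (ps k))
  (cl_traj A0 Ai B0 Bi K0 Ki ps)) => // k v1 v2.
by rewrite (clmx_mul_data Xplus_sys MCL_F (F_FQ _ (ps_in k))); exact: diss.
Qed.
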